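(* Let $\alpha\in[0,\infty)^n$ be non-increasing ($\alpha_1\ge\dots\ge\alpha_n$) and let $f\colon\mathcal{B}_n\to\mathcal{H}_d$ satisfy $\|f(x)-f(y)\|\le d_\alpha(x,y)$ for all $x,y\in\mathcal{B}_n$. Let $X$ be a $\mathcal{B}_n$-valued random vector satisfying the stochastic covering property. Let $\mathcal{F}_0$ be the trivial $\sigma$-field, $\mathcal{F}_l=\sigma(X_1,\dots,X_l)$ for $l\in[n]$, and $M_l=\mathbb{E}[f(X)\mid\mathcal{F}_l]-\mathbb{E}[f(X)\mid\mathcal{F}_{l-1}]$. Then for every $l\in[n]$, $M_l^2\preccurlyeq4\alpha_l^2I_d$.
   Context: $\mathcal{B}_n=\{0,1\}^n$, $\mathcal{H}_d$ the $d\times d$ Hermitian matrices, $\|\cdot\|$ operator norm, $\preccurlyeq$ positive semidefinite order, $I_d$ identity. $d_\alpha(x,y)=\sum_i\alpha_i\mathbf{1}\{x_i\ne y_i\}$. For $S\subset[n]$, $x_S=(x_i)_{i\in S}$; $x\triangleright y$ means $x=y$ or $x=y+e_i$ for some $i$. $X$ satisfies the stochastic covering property if for every $S\subset[n]$ and $x,y\in\mathcal{B}_n$ with $x_S\triangleright y_S$ there is a coupling $(U,V)$ of $\mathcal{L}(X_{S^c}\mid X_S=y_S)$ and $\mathcal{L}(X_{S^c}\mid X_S=x_S)$ with $U\triangleright V$ a.s. *)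

From HB Require Import structures.
From mathcomp Require Import all_boot all_order all_algebra.
From mathcomp Require Import classical_sets reals.
From mathcomp.real_closed Require Import complex.
Set Implicit Arguments. Unset Strict Implicit. Unset Printing Implicit Defensive.
Import Order.TTheory GRing.Theory Num.Theory.
Local Open Scope ring_scope.

(** The hypercube B_n = {0,1}^n, with coordinates indexed by 'I_n
    (coordinate i : 'I_n is coordinate i+1 of the paper). *)
Definition cube (n : nat) := {ffun 'I_n -> bool}.

Section Defs.
Variable R : realType.
Local Notation C := (R[i]).

Definition adjmx (m k : nat) (A : 'M[C]_(m, k)) : 'M[C]_(k, m) :=
  (map_mx Num.conj A)^T.

Definition is_hermitian (d : nat) (A : 'M[C]_d) : Prop := adjmx A = A.

Definition vnorm (d : nat) (v : 'cV[C]_d) : R :=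
  Num.sqrt (\sum_(j < d) (complex.Re (v j 0) ^+ 2 + complex.Im (v j 0) ^+ 2)).

Definition opnorm (d : nat) (A : 'M[C]_d) : R :=
  sup [set vnorm (A *m v) | v in [set v : 'cV[C]_d | vnorm v = 1]].

(** Loewner order: A <= B iff B - A is positive semidefinite,
    i.e. v^* (B - A) v >= 0 (real and nonnegative) for all v *)
Definition loewner_le (d : nat) (A B : 'M[C]_d) : Prop :=
  forall v : 'cV[C]_d, 0 <= (adjmx v *m (B - A) *m v) 0 0.

Definition agree_on (n : nat) (S : {set 'I_n}) (x y : cube n) : bool :=
  [forall i in S, x i == y i].

Definition covers_on (n : nat) (S : {set 'I_n}) (x y : cube n) : Prop :=
  agree_on S x y \/
  exists2 i, i \in S &
    [/\ x i = true, y i = false &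
        forall j, j \in S -> j != i -> x j = y j].

Definition dalpha (n : nat) (alpha : 'I_n -> R) (x y : cube n) : R :=
  \sum_(i < n) alpha i * (x i != y i)%:R.

(** p is the law (pmf) of a B_n-valued random vector *)
Definition is_pmf (n : nat) (p : cube n -> R) : Prop :=
  (forall x, 0 <= p x) /\ \sum_x p x = 1.

Definition prob_agree (n : nat) (p : cube n -> R) (S : {set 'I_n}) (y : cube n)
  : R := \sum_(z | agree_on S z y) p z.

Definition cond_prob (n : nat) (p : cube n -> R) (S : {set 'I_n})
  (y a : cube n) : R :=
  (\sum_(z | agree_on S z y && agree_on (~: S) z a) p z) / prob_agree p S y.

(** pi : B_n x B_n -> R is a coupling (U,V) of L(X_{S^c} | X_S = y_S) and
    L(X_{S^c} | X_S = x_S) with U |> V a.s.; U and V are the restrictions to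
    S^c of the two components of a pair distributed according to pi. *)
Definition covering_coupling (n : nat) (p : cube n -> R) (S : {set 'I_n})
  (x y : cube n) (pi : cube n -> cube n -> R) : Prop :=
  [/\ forall u v, 0 <= pi u v,
      forall a, \sum_u \sum_v (agree_on (~: S) u a)%:R * pi u v
                = cond_prob p S y a,
      forall a, \sum_u \sum_v (agree_on (~: S) v a)%:R * pi u v
                = cond_prob p S x a
    & forall u v, 0 < pi u v -> covers_on (~: S) u v].

(** Stochastic covering property.  Conditional laws are only defined for
    conditioning events of positive probability. *)
Definition SCP (n : nat) (p : cube n -> R) : Prop :=
  forall (S : {set 'I_n}) (x y : cube n),
    covers_on S x y -> 0 < prob_agree p S x -> 0 < prob_agree p S y ->
    exists pi, covering_coupling p S x y pi.

(** first l coordinates (the paper's X_1..X_l) *)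
Definition prefix_set (n l : nat) : {set 'I_n} := [set i : 'I_n | (i < l)%N].

(** E[f(X) | F_l] evaluated at the outcome X = x *)
Definition condE (n d : nat) (p : cube n -> R) (f : cube n -> 'M[C]_d)
  (l : nat) (x : cube n) : 'M[C]_d :=
  ((prob_agree p (prefix_set n l) x)^-1)%:C%C *:
    \sum_(z | agree_on (prefix_set n l) z x) ((p z)%:C)%C *: f z.

End Defs.

(* Conditioning additionally on X_l splits E[f | F_(l-1)] into a convex
   combination of the values of E[f | F_l] at x and at x with coordinate l
   flipped, so M_l is a multiple, by a factor in [0,1], of their difference.
   The stochastic covering property couples the two conditional laws of the
   remaining coordinates as (U, V) with U |> V, so the two glued outcomes
   differ in coordinate l and in at most one later coordinate j: they are at
   d_alpha-distance at most alpha_l + alpha_j <= 2 alpha_l.  Averaging over the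
   coupling (Jensen for the squared Euclidean norm) gives
   |M_l w| <= 2 alpha_l |w|, which for Hermitian M_l is M_l^2 <= 4 alpha_l^2 I. *)

From HB Require Import structures.
From mathcomp Require Import all_boot all_order all_algebra.
From mathcomp Require Import classical_sets reals.
From mathcomp.real_closed Require Import complex.
From mathcomp Require Import ring lra.
Import Order.TTheory GRing.Theory Num.Theory.
Local Open Scope ring_scope.
Set Implicit Arguments. Unset Strict Implicit. Unset Printing Implicit Defensive.

Lemma sqr_wsum_le (R : realFieldType) (I : finType) (w a : I -> R) :
  (forall k, 0 <= w k) ->
  (\sum_k w k * a k) ^+ 2 <= (\sum_k w k) * \sum_k w k * a k ^+ 2.
Proof.
move=> w_ge0; set W := \sum_k w k; set m := \sum_k w k * a k.
set Q := \sum_k w k * a k ^+ 2.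
have [W0|W_neq0] := eqVneq W 0.
  have w0 k : w k = 0 by move/psumr_eq0P: W0; apply.
  by rewrite /m big1 ?expr0n ?W0 ?mul0r // => k _; rewrite w0 mul0r.
have var : \sum_k w k * (W * a k - m) ^+ 2 = W * (W * Q - m ^+ 2).
  transitivity (\sum_k (W ^+ 2 * (w k * a k ^+ 2) + m ^+ 2 * w k
                        - (W * m) *+ 2 * (w k * a k))).
    by apply: eq_bigr => k _; ring.
  by rewrite sumrB big_split -!mulr_sumr /= -/W -/m -/Q; ring.
have : 0 <= W * (W * Q - m ^+ 2).
  by rewrite -var; apply: sumr_ge0 => k _; rewrite mulr_ge0 ?sqr_ge0.
by rewrite pmulr_rge0 ?subr_ge0 // lt_def W_neq0 sumr_ge0.
Qed.

Section SquaredNorms.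
Variable R : realType.
Local Notation C := R[i].

Definition sqnormc (z : C) : R := complex.Re z ^+ 2 + complex.Im z ^+ 2.

Definition sqnormv d (v : 'cV[C]_d) : R := \sum_j sqnormc (v j 0).

Lemma sqnormc_ge0 z : 0 <= sqnormc z.
Proof. by rewrite addr_ge0 ?sqr_ge0. Qed.

Lemma sqnormc_eq0 z : sqnormc z = 0 -> z = 0.
Proof.
case: z => a b; rewrite /sqnormc /= => ab0.
have -> : a = 0 by nra.
by have -> : b = 0 by nra.
Qed.

Lemma sqnormcM (a b : C) : sqnormc (a * b) = sqnormc a * sqnormc b.
Proof. by case: a b => [a1 a2] [b1 b2]; rewrite /sqnormc /=; ring. Qed.

Lemma sqnormcN (a : C) : sqnormc (- a) = sqnormc a.
Proof. by case: a => a1 a2; rewrite /sqnormc /= !sqrrN. Qed.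

Lemma sqnormc_real (r : R) : sqnormc r%:C%C = r ^+ 2.
Proof. by rewrite /sqnormc /= expr0n addr0. Qed.

Lemma mul_conjc_self (z : C) : Num.conj z * z = (sqnormc z)%:C%C.
Proof. by case: z => a b; rewrite /sqnormc; congr Complex => /=; ring. Qed.

Lemma Re_wsum (I : finType) (w : I -> R) (z : I -> C) :
  complex.Re (\sum_k (w k)%:C%C * z k) = \sum_k w k * complex.Re (z k).
Proof.
elim/big_rec2: _ => // k a s _ <-.
by case: (z k) s => [x y] [u v] /=; rewrite mul0r subr0.
Qed.

Lemma Im_wsum (I : finType) (w : I -> R) (z : I -> C) :
  complex.Im (\sum_k (w k)%:C%C * z k) = \sum_k w k * complex.Im (z k).
Proof.
elim/big_rec2: _ => // k a s _ <-.
by case: (z k) s => [x y] [u v] /=; rewrite mul0r addr0.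
Qed.

Lemma sqnormc_wsum_le (I : finType) (w : I -> R) (z : I -> C) :
  (forall k, 0 <= w k) ->
  sqnormc (\sum_k (w k)%:C%C * z k) <= (\sum_k w k) * \sum_k w k * sqnormc (z k).
Proof.
move=> w_ge0; rewrite /sqnormc Re_wsum Im_wsum.
apply: le_trans (lerD (sqr_wsum_le _ w_ge0) (sqr_wsum_le _ w_ge0)) _.
by rewrite -mulrDr -big_split /=; under [X in _ <= _ * X]eq_bigr do rewrite mulrDr.
Qed.

Lemma sqnormv_ge0 d (v : 'cV[C]_d) : 0 <= sqnormv v.
Proof. by apply: sumr_ge0 => j _; apply: sqnormc_ge0. Qed.

Lemma sqnormv_eq0 d (v : 'cV[C]_d) : sqnormv v = 0 -> v = 0.
Proof.
move/psumr_eq0P=> v0; apply/matrixP => j k; rewrite ord1 mxE.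
by apply: sqnormc_eq0; apply: v0 => // i _; apply: sqnormc_ge0.
Qed.

Lemma sqnormvZ d (r : R) (v : 'cV[C]_d) : sqnormv (r%:C%C *: v) = r ^+ 2 * sqnormv v.
Proof.
by rewrite /sqnormv mulr_sumr; apply: eq_bigr => j _; rewrite mxE sqnormcM sqnormc_real.
Qed.

Lemma sqnormvN d (v : 'cV[C]_d) : sqnormv (- v) = sqnormv v.
Proof. by apply: eq_bigr => j _; rewrite mxE sqnormcN. Qed.

Lemma sqnormv0 d : sqnormv (0 : 'cV[C]_d) = 0.
Proof. by rewrite -(scale0r 0) -(rmorph0 (real_complex R)) sqnormvZ expr0n mul0r. Qed.

Lemma sqnormv_wsum_le (I : finType) d (w : I -> R) (y : I -> 'cV[C]_d) :
  (forall k, 0 <= w k) ->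
  sqnormv (\sum_k (w k)%:C%C *: y k) <= (\sum_k w k) * \sum_k w k * sqnormv (y k).
Proof.
move=> w_ge0; rewrite /sqnormv.
apply: le_trans (_ : _ <= \sum_j (\sum_k w k) * \sum_k w k * sqnormc (y k j 0)) _.
  apply: ler_sum => j _; rewrite summxE.
  by under eq_bigr do rewrite mxE; apply: sqnormc_wsum_le.
rewrite -mulr_sumr exchange_big /=.
by under [X in _ <= _ * X]eq_bigr do rewrite mulr_sumr.
Qed.

Lemma vnormE d (v : 'cV[C]_d) : vnorm v = Num.sqrt (sqnormv v).
Proof. by []. Qed.

Lemma opnorm_set_has_ub d (A : 'M[C]_d) :
  has_ubound [set vnorm (A *m v) | v in [set v : 'cV[C]_d | vnorm v = 1]].
Proof.
set K := d%:R * \sum_i \sum_j sqnormc (A i j).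
have K_ge0 : 0 <= K.
  by rewrite mulr_ge0 ?ler0n ?sumr_ge0 // => i _; rewrite sumr_ge0 // => j _;
    apply: sqnormc_ge0.
have entry_le (v : 'cV[C]_d) (j : 'I_d) : sqnormc (v j 0) <= sqnormv v.
  by rewrite /sqnormv (bigD1 j) //= lerDl sumr_ge0 // => i _; apply: sqnormc_ge0.
have AvK (v : 'cV[C]_d) : sqnormv (A *m v) <= K * sqnormv v.
  rewrite /K -mulrA mulr_suml mulr_sumr; apply: ler_sum => i _; rewrite mxE.
  have := @sqnormc_wsum_le 'I_d (fun=> 1) (fun j => A i j * v j 0) (fun=> ler01).
  under eq_bigr do rewrite mul1r; move/le_trans; apply.
  rewrite sumr_const card_ord ler_wpM2l ?ler0n // mulr_suml.
  by apply: ler_sum => j _; rewrite mul1r sqnormcM ler_wpM2l ?sqnormc_ge0.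
exists (Num.sqrt K) => _ [v /= v1 <-].
rewrite vnormE ler_sqrt //; apply: le_trans (AvK v) _.
by rewrite -[sqnormv v]sqr_sqrtr ?sqnormv_ge0 // -vnormE v1 expr1n mulr1.
Qed.

Lemma vnorm_mulmx_le d (A : 'M[C]_d) (v : 'cV[C]_d) :
  vnorm (A *m v) <= opnorm A * vnorm v.
Proof.
have [v0|v_neq0] := eqVneq (sqnormv v) 0.
  by rewrite (sqnormv_eq0 v0) mulmx0 vnormE sqnormv0 sqrtr0 mulr0.
set s := vnorm v.
have s_gt0 : 0 < s by rewrite sqrtr_gt0 lt_def v_neq0 sqnormv_ge0.
have u1 : vnorm ((s^-1)%:C%C *: v) = 1.
  by rewrite vnormE sqnormvZ exprVn sqr_sqrtr ?sqnormv_ge0 // mulVf ?sqrtr1.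
have : vnorm (A *m ((s^-1)%:C%C *: v)) <= opnorm A.
  by apply: ub_le_sup; [exact: opnorm_set_has_ub | exists ((s^-1)%:C%C *: v)].
rewrite -scalemxAr vnormE sqnormvZ sqrtrM ?sqr_ge0 // sqrtr_sqr -vnormE.
by rewrite ger0_norm ?invr_ge0 ?(ltW s_gt0) // ler_pdivrMl // mulrC.
Qed.

Lemma sqnormv_mulmx_le d (A : 'M[C]_d) (v : 'cV[C]_d) (b : R) :
  opnorm A <= b -> sqnormv (A *m v) <= b ^+ 2 * sqnormv v.
Proof.
move=> Ab; have Av_le := vnorm_mulmx_le A v.
have nv_ge0 (u : 'cV[C]_d) : 0 <= vnorm u by apply: sqrtr_ge0.
have Av_le_b : vnorm (A *m v) <= b * vnorm v.
  by apply: le_trans Av_le _; apply: ler_wpM2r.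
rewrite -[sqnormv (A *m v)]sqr_sqrtr ?sqnormv_ge0 // -[sqnormv v]sqr_sqrtr ?sqnormv_ge0 //.
rewrite -!vnormE -exprMn; have := nv_ge0 (A *m v); nra.
Qed.

Lemma adjmxM m k q (A : 'M[C]_(m, k)) (B : 'M[C]_(k, q)) :
  adjmx (A *m B) = adjmx B *m adjmx A.
Proof. by rewrite /adjmx map_mxM trmx_mul. Qed.

Lemma adjmxB m k (A B : 'M[C]_(m, k)) : adjmx (A - B) = adjmx A - adjmx B.
Proof. by apply/matrixP => i j; rewrite !mxE rmorphB. Qed.

Lemma adjmxZ_real m k (r : R) (A : 'M[C]_(m, k)) :
  adjmx (r%:C%C *: A) = r%:C%C *: adjmx A.
Proof.
by apply/matrixP => i j; rewrite !mxE rmorphM; congr (_ * _); apply: conjc_real.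
Qed.

Lemma adjmx_sum m k (I : finType) (P : pred I) (F : I -> 'M[C]_(m, k)) :
  adjmx (\sum_(i | P i) F i) = \sum_(i | P i) adjmx (F i).
Proof.
apply/matrixP => a b; rewrite !mxE !summxE rmorph_sum.
by apply: eq_bigr => i _; rewrite !mxE.
Qed.

Lemma adjmx_mulmx_self d (v : 'cV[C]_d) : (adjmx v *m v) 0 0 = (sqnormv v)%:C%C.
Proof. by rewrite mxE rmorph_sum; apply: eq_bigr => j _; rewrite !mxE mul_conjc_self. Qed.

Lemma loewner_le_sqr_scalar d (M : 'M[C]_d) (b : R) :
  is_hermitian M -> (forall w, sqnormv (M *m w) <= b * sqnormv w) ->
  loewner_le (M *m M) (b%:C%C)%:M.
Proof.
move=> herM Mb v.
have -> : adjmx v *m ((b%:C%C)%:M - M *m M) *m v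
          = b%:C%C *: (adjmx v *m v) - adjmx (M *m v) *m (M *m v).
  by rewrite mulmxBr mulmxBl mul_mx_scalar -scalemxAl adjmxM herM !mulmxA.
rewrite (_ : _ 0 0 = (b * sqnormv v - sqnormv (M *m v))%:C%C).
  by rewrite ler0c subr_ge0.
by rewrite mxE [X in X + _]mxE [X in _ + X]mxE !adjmx_mulmx_self rmorphB rmorphM.
Qed.

End SquaredNorms.

Section Cube.
Variable n : nat.
Implicit Types (x y z a u v : cube n) (S : {set 'I_n}).

Definition flip x (l : 'I_n) : cube n := [ffun i => if i == l then ~~ x l else x i].

Definition glue S y a : cube n := [ffun i => if i \in S then y i else a i].

Lemma glueE S y a i : glue S y a i = if i \in S then y i else a i.
Proof. by rewrite ffunE. Qed.

Lemma flip_at x l : flip x l l = ~~ x l.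
Proof. by rewrite ffunE eqxx. Qed.

Lemma flip_neq x l i : i != l -> flip x l i = x i.
Proof. by rewrite ffunE => /negbTE ->. Qed.

Lemma flipK l : involutive (flip^~ l).
Proof.
move=> x; apply/ffunP => i; rewrite ffunE.
by case: eqP => [->|/eqP il]; rewrite ?flip_at ?negbK ?flip_neq.
Qed.

Lemma agree_on_sym S x y : agree_on S x y = agree_on S y x.
Proof. by apply/forall_inP/forall_inP => h i /h; rewrite eq_sym. Qed.

Lemma agree_on_prefixS (l : 'I_n) z x :
  agree_on (prefix_set n l.+1) z x = agree_on (prefix_set n l) z x && (z l == x l).
Proof.
apply/idP/andP => [/forall_inP zx|[/forall_inP zx zxl]].
  by split; [apply/forall_inP => i; rewrite inE => /ltnW il|]; apply: zx;
    rewrite inE ?ltnS.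
apply/forall_inP => i; rewrite inE ltnS leq_eqVlt => /orP[/eqP/val_inj -> //|il].
by apply: zx; rewrite inE.
Qed.

Lemma agree_on_prefixS_flip (l : 'I_n) z x :
  agree_on (prefix_set n l.+1) z (flip x l)
  = agree_on (prefix_set n l) z x && (z l != x l).
Proof.
rewrite agree_on_prefixS flip_at; congr andb; last by case: (z l); case: (x l).
apply: eq_forallb_in => i; rewrite inE => il.
by rewrite flip_neq // neq_ltn il.
Qed.

Lemma sum_prefix_split (V : nmodType) (F : cube n -> V) (l : 'I_n) x :
  \sum_(z | agree_on (prefix_set n l) z x) F z =
  \sum_(z | agree_on (prefix_set n l.+1) z x) F z +
  \sum_(z | agree_on (prefix_set n l.+1) z (flip x l)) F z.
Proof.
rewrite (bigID (fun z => z l == x l)) /=.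
by congr (_ + _); apply: eq_bigl => z; rewrite ?agree_on_prefixS_flip ?agree_on_prefixS.
Qed.

Lemma covers_on_flip (l : 'I_n) x :
  x l -> covers_on (prefix_set n l.+1) x (flip x l).
Proof.
move=> xl; right; exists l; first by rewrite inE.
by split; rewrite ?flip_at ?xl // => j _ jl; rewrite flip_neq.
Qed.

Lemma agree_on_glue S z y a :
  (agree_on S z y && agree_on (~: S) z a) = (z == glue S y a).
Proof.
apply/andP/eqP => [[/forall_inP zy /forall_inP za]|->].
  apply/ffunP => i; rewrite glueE; case: ifP => iS; apply/eqP; first exact: zy.
  by apply: za; rewrite inE iS.
by split; apply/forall_inP => i; rewrite glueE ?inE; [move=> -> | move/negbTE ->].
Qed.

Lemma glue_agree_on S y z : agree_on S z y -> glue S y z = z.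
Proof.
move/forall_inP => zy; apply/ffunP => i; rewrite glueE.
by case: ifP => // iS; apply/esym/eqP/zy.
Qed.

Lemma sum_agree_on_glue (V : nmodType) (F : cube n -> V) S y a :
  \sum_(z | agree_on S z y && agree_on (~: S) z a) F z = F (glue S y a).
Proof. by rewrite (eq_bigl _ _ (fun z => agree_on_glue S z y a)) big_pred1_eq. Qed.

Lemma sum_agree_on_select (V : nmodType) (F : cube n -> V) S y u :
  \sum_(z | agree_on S z y) (if agree_on (~: S) u z then F z else 0)
  = F (glue S y u).
Proof.
rewrite -big_mkcondr -(sum_agree_on_glue F); apply: eq_bigl => z.
by rewrite (agree_on_sym _ u).
Qed.

End Cube.

Section Conditioning.
Variables (R : realType) (n : nat) (p : cube n -> R).
Local Notation C := R[i].
Implicit Types (x y z u v : cube n) (S : {set 'I_n}).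

Lemma cond_prob_agree_on S y z :
  agree_on S z y -> cond_prob p S y z = p z / prob_agree p S y.
Proof. by move=> zy; rewrite /cond_prob sum_agree_on_glue glue_agree_on. Qed.

Lemma sum_cond_prob S y : 0 < prob_agree p S y ->
  \sum_(z | agree_on S z y) cond_prob p S y z = 1.
Proof.
move=> py; under eq_bigr => z zy do rewrite cond_prob_agree_on //.
by rewrite -mulr_suml mulfV ?gt_eqF.
Qed.

Lemma normalized_sum_cond_prob (V : lmodType C) S y (F : cube n -> V) :
  (prob_agree p S y)^-1%:C%C *: \sum_(z | agree_on S z y) (p z)%:C%C *: F z
  = \sum_(z | agree_on S z y) (cond_prob p S y z)%:C%C *: F z.
Proof.
rewrite scaler_sumr; apply: eq_bigr => z zy.
by rewrite scalerA -rmorphM cond_prob_agree_on // mulrC.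
Qed.

Lemma sum_cond_prob_coupling (V : lmodType C) S y (F : cube n -> V)
    (pi : cube n -> cube n -> R) (g : cube n -> cube n -> cube n) :
  (forall a, \sum_u \sum_v (agree_on (~: S) (g u v) a)%:R * pi u v = cond_prob p S y a) ->
  \sum_(z | agree_on S z y) (cond_prob p S y z)%:C%C *: F z
  = \sum_u \sum_v (pi u v)%:C%C *: F (glue S y (g u v)).
Proof.
move=> marg.
under eq_bigr => z _.
  rewrite -marg rmorph_sum scaler_suml.
  under eq_bigr => u _ do rewrite rmorph_sum scaler_suml.
  over.
rewrite /= exchange_big; apply: eq_bigr => u _.
rewrite exchange_big; apply: eq_bigr => v _.
rewrite -(sum_agree_on_select (fun z => (pi u v)%:C%C *: F z)).
by apply: eq_bigr => z _; case: agree_on; rewrite ?mul1r ?mul0r ?rmorph0 ?scale0r.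
Qed.

Lemma coupling_mass S y (pi : cube n -> cube n -> R) (g : cube n -> cube n -> cube n) :
  0 < prob_agree p S y ->
  (forall a, \sum_u \sum_v (agree_on (~: S) (g u v) a)%:R * pi u v = cond_prob p S y a) ->
  \sum_u \sum_v pi u v = 1.
Proof.
move=> py marg; apply: (@complexI R).
have := sum_cond_prob_coupling (fun=> (1 : C)) marg.
rewrite -(sum_cond_prob py) !rmorph_sum.
(* In the regular algebra [C], [k%:A = k *: 1] is [k * 1]. *)
under eq_bigr do rewrite -[_%:A]/(_ * 1) mulr1.
under [in X in _ = X -> _]eq_bigr do under eq_bigr do rewrite -[_%:A]/(_ * 1) mulr1.
move=> ->; apply: eq_bigr => u _; exact: rmorph_sum.
Qed.

End Conditioning.

Section MartingaleIncrement.
Variables (R : realType) (n d : nat) (p : cube n -> R) (f : cube n -> 'M[R[i]]_d).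
Hypothesis p_ge0 : forall x, 0 <= p x.

Lemma prob_agree_scale_condE k y :
  (prob_agree p (prefix_set n k) y)%:C%C *: condE p f k y
  = \sum_(z | agree_on (prefix_set n k) z y) (p z)%:C%C *: f z.
Proof.
rewrite /condE scalerA -rmorphM.
have [py0|py_neq0] := eqVneq (prob_agree p (prefix_set n k) y) 0; last first.
  by rewrite mulfV // rmorph1 scale1r.
have pz0 z : agree_on (prefix_set n k) z y -> p z = 0.
  by move: z; apply/psumr_eq0P; rewrite ?py0 // => z _; apply: p_ge0.
rewrite py0 mul0r rmorph0 scale0r big1 // => z /pz0 ->.
by rewrite rmorph0 scale0r.
Qed.

Lemma condE_increment (l : 'I_n) x :
  0 < prob_agree p (prefix_set n l.+1) x ->
  condE p f l.+1 x - condE p f l x =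
  (prob_agree p (prefix_set n l.+1) (flip x l) /
   (prob_agree p (prefix_set n l.+1) x + prob_agree p (prefix_set n l.+1) (flip x l)))%:C%C
  *: (condE p f l.+1 x - condE p f l.+1 (flip x l)).
Proof.
set pa := prob_agree p _ x; set pb := prob_agree p _ (flip x l) => pa_gt0.
have pab_gt0 : 0 < pa + pb by rewrite ltr_wpDr // sumr_ge0.
have pab_split : pa + pb = prob_agree p (prefix_set n l) x.
  by rewrite /prob_agree sum_prefix_split.
have condE_split : (pa + pb)%:C%C *: condE p f l x
    = pa%:C%C *: condE p f l.+1 x + pb%:C%C *: condE p f l.+1 (flip x l).
  by rewrite pab_split !prob_agree_scale_condE sum_prefix_split.
apply: (scalerI (a := (pa + pb)%:C%C)); first by rewrite (inj_eq (@complexI R)) gt_eqF.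
(* Abstracting the three conditional expectations keeps the rewrites below
   from trying to unify [condE p f l x] with [condE p f l.+1 x] by unfolding. *)
move: condE_split; move: (condE p f l.+1 x) (condE p f l x) (condE p f l.+1 (flip x l)).
move=> E1 E0 E2 E0_split.
rewrite scalerA -rmorphM [_ * (pb / _)]mulrC divfK ?gt_eqF // scalerBr E0_split.
by rewrite rmorphD scalerDl scalerBr opprD addrA [X in X - _ - _]addrC addrK.
Qed.

Lemma condE_hermitian k y :
  (forall x, is_hermitian (f x)) -> is_hermitian (condE p f k y).
Proof.
move=> f_herm; rewrite /is_hermitian /condE adjmxZ_real adjmx_sum.
by congr (_ *: _); apply: eq_bigr => z _; rewrite adjmxZ_real f_herm.
Qed.

End MartingaleIncrement.

Section FlipBound.
Variables (R : realType) (n d : nat) (alpha : 'I_n -> R).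
Variables (f : cube n -> 'M[R[i]]_d) (p : cube n -> R).
Hypothesis alpha_ge0 : forall i, 0 <= alpha i.
Hypothesis alpha_nonincr : forall i j : 'I_n, (i <= j)%N -> alpha j <= alpha i.
Hypothesis f_lipschitz : forall x y, opnorm (f x - f y) <= dalpha alpha x y.
Hypothesis p_scp : SCP p.

Lemma dalpha_le_pair (a b : cube n) (l j : 'I_n) :
  (forall i, a i != b i -> i = l \/ i = j) -> dalpha alpha a b <= alpha l + alpha j.
Proof.
move=> ab_lj; rewrite /dalpha.
apply: le_trans (_ : _ <= \sum_i (alpha i * (i == l)%:R + alpha i * (i == j)%:R)) _.
  apply: ler_sum => i _; have [abi|] := boolP (a i != b i); last first.
    by rewrite mulr0 addr_ge0 // mulr_ge0 ?ler0n.
  by case: (ab_lj i abi) => ->; rewrite eqxx mulr1 ?lerDl ?lerDr mulr_ge0 ?ler0n.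
have pick k : \sum_i alpha i * (i == k)%:R = alpha k.
  by rewrite (bigD1 k) //= eqxx mulr1 big1 ?addr0 // => i /negbTE ->; rewrite mulr0.
by rewrite big_split /= !pick.
Qed.

Lemma dalpha_glue_flip_le (l : 'I_n) (x u v : cube n) :
  covers_on (~: prefix_set n l.+1) u v ->
  dalpha alpha (glue (prefix_set n l.+1) x v) (glue (prefix_set n l.+1) (flip x l) u)
  <= alpha l + alpha l.
Proof.
have flip_diff i : x i != flip x l i -> i = l.
  by apply: contraNeq => il; rewrite flip_neq.
case=> [/forall_inP uv | [j jS [_ _ uv]]].
  apply: dalpha_le_pair => i; rewrite !glueE; case: ifP => iS.
    by move/flip_diff=> ->; left.
  by move=> /negP[]; rewrite eq_sym uv // inE iS.
apply: le_trans (dalpha_le_pair (l := l) (j := j) _) _.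
  move=> i; rewrite !glueE; case: ifP => iS; first by move/flip_diff=> ->; left.
  have [->|ij] := eqVneq i j; first by right.
  by move=> /negP[]; rewrite uv // inE iS.
rewrite lerD2l alpha_nonincr //.
by move: jS; rewrite !inE ltnS -ltnNge => /ltnW.
Qed.

Lemma condE_flip_down_sqnorm_le (l : 'I_n) (x : cube n) (w : 'cV[R[i]]_d) :
  x l -> 0 < prob_agree p (prefix_set n l.+1) x ->
  0 < prob_agree p (prefix_set n l.+1) (flip x l) ->
  sqnormv ((condE p f l.+1 x - condE p f l.+1 (flip x l)) *m w)
  <= (alpha l + alpha l) ^+ 2 * sqnormv w.
Proof.
move=> xl px pfx.
have [pi [pi_ge0 marg_fx marg_x pi_covers]] := p_scp (covers_on_flip xl) px pfx.
have := coupling_mass (g := fun u _ => u) pfx marg_fx; rewrite pair_bigA => mass.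
rewrite /condE !normalized_sum_cond_prob.
rewrite (sum_cond_prob_coupling (g := fun _ v => v) _ marg_x).
rewrite (sum_cond_prob_coupling (g := fun u _ => u) _ marg_fx).
have -> : forall (F G : cube n -> cube n -> 'M[R[i]]_d),
    (\sum_u \sum_v (pi u v)%:C%C *: F u v - \sum_u \sum_v (pi u v)%:C%C *: G u v) *m w
    = \sum_(k : cube n * cube n) (pi k.1 k.2)%:C%C *: ((F k.1 k.2 - G k.1 k.2) *m w).
  move=> F G; rewrite !pair_bigA -sumrB mulmx_suml; apply: eq_bigr => -[u v] _ /=.
  by rewrite -scalerBr -scalemxAl.
apply: le_trans (sqnormv_wsum_le _ _) _; first by case=> u v; apply: pi_ge0.
rewrite mass mul1r -[X in _ <= X]mul1r -mass mulr_suml.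
apply: ler_sum => -[u v] _ /=.
have [->|pi_neq0] := eqVneq (pi u v) 0; first by rewrite !mul0r.
apply: ler_wpM2l; first exact: pi_ge0.
apply: sqnormv_mulmx_le.
apply: le_trans (f_lipschitz _ _) _; apply: dalpha_glue_flip_le; apply: pi_covers.
by rewrite lt_def pi_neq0 pi_ge0.
Qed.

Lemma condE_flip_sqnorm_le (l : 'I_n) (x : cube n) (w : 'cV[R[i]]_d) :
  0 < prob_agree p (prefix_set n l.+1) x ->
  0 < prob_agree p (prefix_set n l.+1) (flip x l) ->
  sqnormv ((condE p f l.+1 x - condE p f l.+1 (flip x l)) *m w)
  <= (alpha l + alpha l) ^+ 2 * sqnormv w.
Proof.
case xl: (x l) => px pfx; first exact: condE_flip_down_sqnorm_le.
rewrite -opprB mulNmx sqnormvN.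
have := @condE_flip_down_sqnorm_le l (flip x l) w; rewrite flipK.
by apply; rewrite ?flip_at ?xl.
Qed.

End FlipBound.

Unset Implicit Arguments.
Set Strict Implicit.
Set Printing Implicit Defensive.

Theorem lemma5p1 (R : realType) (n d : nat) (alpha : 'I_n -> R)
  (f : cube n -> 'M[R[i]]_d) (p : cube n -> R) :
  (forall i, 0 <= alpha i) ->
  (forall i j : 'I_n, (i <= j)%N -> alpha j <= alpha i) ->
  (forall x, is_hermitian (f x)) ->
  (forall x y, opnorm (f x - f y) <= dalpha alpha x y) ->
  is_pmf p -> SCP p ->
  forall (l : 'I_n) (x : cube n), 0 < p x ->
    let M := condE p f l.+1 x - condE p f l x in
    loewner_le (M *m M) ((4 * alpha l ^+ 2)%:C%C)%:M.
Proof.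
move=> alpha_ge0 alpha_nonincr f_herm f_lip [p_ge0 _] p_scp l x px M.
have pa_gt0 : 0 < prob_agree p (prefix_set n l.+1) x.
  apply: lt_le_trans px _; rewrite /prob_agree (bigD1 x) /=; last exact/forall_inP.
  by rewrite lerDl sumr_ge0.
have -> : 4 * alpha l ^+ 2 = (alpha l + alpha l) ^+ 2 by ring.
apply: loewner_le_sqr_scalar => [|w].
  by rewrite /is_hermitian adjmxB !condE_hermitian.
rewrite /M condE_increment // -scalemxAl sqnormvZ.
set pb := prob_agree p _ (flip x l).
have [pb0|pb_neq0] := eqVneq pb 0.
  by rewrite pb0 mul0r expr0n mul0r mulr_ge0 ?sqr_ge0 ?sqnormv_ge0.
have pb_gt0 : 0 < pb by rewrite lt_def pb_neq0 sumr_ge0.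
rewrite -[X in _ <= X]mul1r ler_pM ?sqr_ge0 ?sqnormv_ge0 //.
  rewrite expr_le1 ?divr_ge0 ?addr_ge0 ?(ltW pa_gt0) ?(ltW pb_gt0) //.
  by rewrite ler_pdivrMr ?addr_gt0 // mul1r lerDr ltW.
exact: condE_flip_sqnorm_le.
Qed.
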